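(* In the model with two recommendation thresholds $0<R_1\le R_2<1$, suppose $F$ is symmetric ($F(-i)=1-F(i)$ for all $i$), and let $\sigma=q_H/q_L$. Then the value $V(R_1,R_2)$ of the recommendation system is (i) decreasing in $R_1$ if $\sigma<1$, and (ii) increasing in $R_2$ if $\sigma>1$.
   Context: Setting. Consumer types are $i\in[-1/2,1/2]$, distributed according to a continuous cumulative distribution function $F$ with full support on $[-1/2,1/2]$. A product has a quality vector $(Q_1,Q_2)\in\{0,1\}^2$; a type-$i$ consumer gets payoff $(1/2+i)Q_1+(1/2-i)Q_2$ from it. The versions $(1,1),(1,0),(0,1),(0,0)$ have prior probabilities $q_H,q_1,q_2,q_L$ respectively, all strictly positive and summing to $1$. One product carries a recommendation from a sender whose type is drawn from $F$ independently of the product. Given thresholds $0<R_1\le R_2<1$, the sender gives a buy recommendation $B$ if her payoff from the product is at least $R_2$, a don't-buy recommendation $D$ if it is below $R_1$, and a neutral recommendation $N$ if it lies in $[R_1,R_2)$. For $r\in\{B,N,D\}$, let $\pi^r$ be the probability of recommendation $r$ and $(p_H^r,p_1^r,p_2^r,p_L^r)$ the Bayesian posterior over $(1,1),(1,0),(0,1),(0,0)$ given $r$ (when $\pi^r>0$). Let $U_i^r=p_H^r+(1/2+i)p_1^r+(1/2-i)p_2^r$ and $U_i^0=q_H+(1/2+i)q_1+(1/2-i)q_2$ (expected payoff from an unrecommended alternative). The value of the recommendation system is $V(R_1,R_2)=\sum_{r\in\{B,N,D\}:\,\pi^r>0}\pi^r\int_{-1/2}^{1/2}\max\{U_i^r-U_i^0,0\}\,dF(i)$,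 the expected payoff gain of a receiver drawn from $F$ who, after each recommendation, optimally chooses between the recommended product and an alternative. *)

From HB Require Import structures.
From mathcomp Require Import all_boot all_order all_algebra.
From mathcomp Require Import all_classical all_reals all_analysis.

Set Implicit Arguments.
Unset Strict Implicit.
Unset Printing Implicit Defensive.

Import Order.TTheory GRing.Theory Num.Def Num.Theory.
Import numFieldNormedType.Exports.

Local Open Scope classical_set_scope.
Local Open Scope ring_scope.

(* Product versions (Q1,Q2): (1,1), (1,0), (0,1), (0,0). *)
Inductive version := vH | v1 | v2 | vL.

(* Recommendations: buy, neutral, don't buy. *)
Inductive recom := rB | rN | rD.

Section Model.
Variable R : realType.

Definition half : R := 2^-1.

Definition Q1 (v : version) : R := match v with vH | v1 => 1 | _ => 0 end.
Definition Q2 (v : version) : R := match v with vH | v2 => 1 | _ => 0 end.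

Definition payoff (i : R) (v : version) : R :=
  (2^-1 + i) * Q1 v + (2^-1 - i) * Q2 v.

Definition prior (qH q1 q2 qL : R) (v : version) : R :=
  match v with vH => qH | v1 => q1 | v2 => q2 | vL => qL end.

Definition recommend (R1 R2 u : R) : recom :=
  if R2 <= u then rB else if u < R1 then rD else rN.

Variable F : cumulative R R.
Let mu := lebesgue_stieltjes_measure F.

Definition prob_rec_given (R1 R2 : R) (v : version) (r : recom) : R :=
  fine (mu [set j | j \in `[- half, half]%R /\ recommend R1 R2 (payoff j v) = r]).

Variables (qH q1 q2 qL : R).

Definition prob_rec (R1 R2 : R) (r : recom) : R :=
  prior qH q1 q2 qL vH * prob_rec_given R1 R2 vH r
  + prior qH q1 q2 qL v1 * prob_rec_given R1 R2 v1 r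
  + prior qH q1 q2 qL v2 * prob_rec_given R1 R2 v2 r
  + prior qH q1 q2 qL vL * prob_rec_given R1 R2 vL r.

(* Bayesian posterior p_v^r (meaningful when pi^r > 0). *)
Definition posterior (R1 R2 : R) (r : recom) (v : version) : R :=
  prior qH q1 q2 qL v * prob_rec_given R1 R2 v r / prob_rec R1 R2 r.

Definition U_rec (R1 R2 : R) (r : recom) (i : R) : R :=
  posterior R1 R2 r vH + (2^-1 + i) * posterior R1 R2 r v1
  + (2^-1 - i) * posterior R1 R2 r v2.

Definition U_alt (i : R) : R := qH + (2^-1 + i) * q1 + (2^-1 - i) * q2.

Definition value_term (R1 R2 : R) (r : recom) : \bar R :=
  if 0 < prob_rec R1 R2 r then
    ((prob_rec R1 R2 r)%:E *
     \int[mu]_(i in `[(- half)%R, half])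
        (Num.max (U_rec R1 R2 r i - U_alt i) 0)%:E)%E
  else 0%E.

Definition value (R1 R2 : R) : \bar R :=
  (value_term R1 R2 rB + value_term R1 R2 rN + value_term R1 R2 rD)%E.

End Model.

Definition type_cdf (R : realType) (F : cumulative R R) : Prop :=
  continuous (F : R -> R) /\
  (forall x : R, x <= - 2^-1 -> F x = 0) /\
  (forall x : R, 2^-1 <= x -> F x = 1) /\
  (forall x y : R, - 2^-1 <= x -> x < y -> y <= 2^-1 -> F x < F y).

(** Weighting [U^r - U^0] by [pi^r] turns every term of [V] into the integral
    over types of the positive part of an affine function [gain].  Write
    [gainH] and [gainL] for the weighted gains from buying a high-quality
    product and from avoiding a low-quality one (both nonnegative), and
    [gainM = gainL - gainH] for the gain from the two mixed versions, which by
    symmetry of [F] are recommended with the same probabilities.  The buy,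
    neutral and don't-buy gains are [gainH + (1 - F (R2 - 1/2)) gainM >= 0],
    [(F (R2 - 1/2) - F (R1 - 1/2)) gainM] and [F (R1 - 1/2) gainM - gainL <= 0],
    so that
      [V = int gainH + (1 - F (R1 - 1/2)) int gainM^+
                     - (1 - F (R2 - 1/2)) int gainM^-].
    Since [gainM 0 = (q1 + q2) (qL - qH) / 2] and [F] has full support,
    [int gainM^+ > 0] when [sigma < 1] and [int gainM^- > 0] when [sigma > 1],
    and [F] is strictly increasing on the support. *)

From Pilot Require Import Defs.
From mathcomp Require Import all_boot all_order all_algebra.
From mathcomp Require Import all_classical all_reals all_analysis.
From mathcomp Require Import measurable_realfun ring lra.

Set Implicit Arguments.
Unset Strict Implicit.
Unset Printing Implicit Defensive.

Import Order.TTheory GRing.Theory Num.Def Num.Theory.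
Import numFieldNormedType.Exports.
Local Open Scope classical_set_scope.
Local Open Scope ring_scope.

Section lebesgue_stieltjes_measure_itv.
Context {R : realType} (F : cumulative R R).
Local Notation mu := (lebesgue_stieltjes_measure F).

Lemma lebesgue_stieltjes_measure_itv_oc (a b : R) : a <= b ->
  mu `]a, b] = (F b - F a)%:E.
Proof.
move=> ab; rewrite /lebesgue_stieltjes_measure /measure_extension/=.
rewrite measurable_mu_extE; last exact: is_ocitv.
exact: wlength_itv_bnd.
Qed.

Lemma lebesgue_stieltjes_measure_set1 (x : R) :
  {for x, continuous (F : R -> R)} -> mu [set x] = 0%E.
Proof.
move=> Fx; apply/eqP; rewrite eq_le measure_ge0 andbT; apply/lee_addgt0Pr => e e0.
have /cvgrPdist_lt/(_ e e0)[d /= d0 Fd] := Fx.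
have x_in : [set x] `<=` `]x - d / 2, x] by move=> _ ->; rewrite /= in_itv/=; lra.
rewrite add0e (@le_trans _ _ (mu `]x - d / 2, x]))//.
  by apply: le_measure; rewrite ?inE.
rewrite lebesgue_stieltjes_measure_itv_oc ?lee_fin; last lra.
have /Fd : ball_ normr x d (x - d / 2).
  by rewrite /ball_/= opprB addrC subrK ger0_norm; lra.
by move/(le_lt_trans (ler_norm _))/ltW.
Qed.

Hypothesis cF : continuous (F : R -> R).

Lemma lebesgue_stieltjes_measure_itv_cc (a b : R) : a <= b ->
  mu `[a, b] = (F b - F a)%:E.
Proof.
move=> ab; rewrite -(setU1itv false) ?bnd_simp// measureU//.
- rewrite /= lebesgue_stieltjes_measure_set1 ?add0e ?lebesgue_stieltjes_measure_itv_oc//.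
  exact: cF.
- by rewrite -subset0 => y [/= -> ]; rewrite in_itv/= ltxx.
Qed.

Lemma lebesgue_stieltjes_measure_itv_co (a b : R) : a <= b ->
  mu `[a, b[ = (F b - F a)%:E.
Proof.
move=> ab; rewrite -lebesgue_stieltjes_measure_itv_cc// -(setUitv1 true) ?bnd_simp//.
rewrite measureU/= ?lebesgue_stieltjes_measure_set1 ?adde0//; first exact: cF.
by rewrite -subset0 => y [/=]; rewrite in_itv/= => /andP[_ yb] yE; rewrite yE ltxx in yb.
Qed.

End lebesgue_stieltjes_measure_itv.

Definition affine {R : ringType} (h : R -> R) := forall x, h x = h 0 + (h 1 - h 0) * x.

Lemma measurable_affine (R : realType) (A : set (measurableTypeR R)) (h : R -> R) :
  affine h -> measurable_fun A h.
Proof.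
move=> hE; rewrite (funext hE).
by apply: measurable_funD => //; apply: measurable_funM.
Qed.

Section type_distribution.
Context {R : realType} (F : cumulative R R).
Hypothesis F_cdf : type_cdf F.
Local Notation mu := (lebesgue_stieltjes_measure F).
Local Notation D := (`[- 2^-1, 2^-1]%classic : set (measurableTypeR R)).

Lemma cdf_continuous : continuous (F : R -> R).
Proof. by case: F_cdf. Qed.

Lemma cdf_eq0 (x : R) : x <= - 2^-1 -> F x = 0.
Proof. by case: F_cdf => _ [/(_ x)]. Qed.

Lemma cdf_eq1 (x : R) : 2^-1 <= x -> F x = 1.
Proof. by case: F_cdf => _ [_ [/(_ x)]]. Qed.

Lemma cdf_lt (x y : R) : - 2^-1 <= x -> x < y -> y <= 2^-1 -> F x < F y.
Proof. by case: F_cdf => _ [_ [_ /(_ x y)]]. Qed.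

Lemma cdf_le (x y : R) : x <= y -> F x <= F y.
Proof. exact: cumulative_is_nondecreasing. Qed.

Lemma cdf_ge0 (x : R) : 0 <= F x.
Proof.
rewrite -(@cdf_eq0 (Num.min x (- 2^-1))) ?ge_min ?lexx ?orbT//.
by rewrite cdf_le// ge_min lexx.
Qed.

Lemma cdf_le1 (x : R) : F x <= 1.
Proof.
rewrite -(@cdf_eq1 (Num.max x 2^-1)) ?le_max ?lexx ?orbT//.
by rewrite cdf_le// le_max lexx.
Qed.

Lemma lebesgue_stieltjes_measure_type_support : mu D = 1%E.
Proof.
rewrite lebesgue_stieltjes_measure_itv_cc; [|exact: cdf_continuous|lra].
by rewrite (@cdf_eq1 2^-1) ?(@cdf_eq0 (- 2^-1)) ?subr0.
Qed.

Lemma affine_integrable (h : R -> R) : affine h -> mu.-integrable D (EFin \o h).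
Proof.
move=> hA; apply: measurable_bounded_integrable.
- exact: measurable_itv.
- by rewrite /= lebesgue_stieltjes_measure_type_support ltry.
- exact: measurable_affine.
rewrite /bounded_near; near=> M => x /=; rewrite in_itv/= => /andP[x1 x2].
apply: (@le_trans _ _ (`|h 0| + `|h 1 - h 0|)); last first.
  by near: M; apply: nbhs_pinfty_ge; rewrite realE addr_ge0.
rewrite hA (le_trans (ler_normD _ _))// lerD2l normrM ler_piMr//.
by rewrite ler_norml; apply/andP; split; lra.
Unshelve. all: by end_near.
Qed.

Lemma affine_integrable_funrpos (h : R -> R) :
  affine h -> mu.-integrable D (EFin \o h^\+).
Proof.
by move=> hA; apply: integrable_funrpos (affine_integrable hA); exact: measurable_itv.
Qed.

Lemma Rintegral_funrpos_gt0 (h : R -> R) (a b c : R) :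
  mu.-integrable D (EFin \o h) -> - 2^-1 <= a -> a < b -> b <= 2^-1 -> 0 < c ->
  (forall x, a <= x <= b -> c <= h x) -> 0 < \int[mu]_(x in D) h^\+ x.
Proof.
move=> hint a_ge ab b_le c_gt0 hc.
pose E : set (measurableTypeR R) := `[a, b]%classic.
have mE : measurable E by exact: measurable_itv.
have ED : E `<=` D.
  by move=> x; rewrite /E/= !in_itv/= => /andP[? ?]; apply/andP; split; lra.
have hpint : mu.-integrable D (EFin \o h^\+).
  by apply: integrable_funrpos hint; exact: measurable_itv.
have mhp : measurable_fun D (EFin \o h^\+) by case/integrableP: hpint.
rewrite fine_gt0// integrable_lty// andbT.
apply: (lt_le_trans _ (ge0_subset_integral _ _ _ _ _ ED)) => //; last first.
  by move=> x _; rewrite lee_fin funrpos_ge0.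
apply: (lt_le_trans _ (@ge0_le_integral _ _ _ _ _ mE (cst c%:E) _ _ _ _ _)).
- rewrite integral_cst// /= lebesgue_stieltjes_measure_itv_cc ?(ltW ab)//; last first.
    exact: cdf_continuous.
  by rewrite -EFinM lte_fin mulr_gt0// subr_gt0 cdf_lt.
- by move=> x _; rewrite lee_fin ltW.
- exact: measurable_cst.
- exact: measurable_funS mhp.
- by move=> x /hc cx; rewrite lee_fin /funrpos le_max cx.
Qed.

Lemma affine_Rintegral_funrpos_gt0 (h : R -> R) :
  affine h -> 0 < h 0 -> 0 < \int[mu]_(x in D) h^\+ x.
Proof.
move=> hA h0; have hint := affine_integrable hA.
have [slope_ge0|slope_lt0] := leP 0 (h 1 - h 0).
- apply: (Rintegral_funrpos_gt0 (a := 0) (b := 2^-1) (c := h 0) hint) => //; try lra.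
  by move=> x /andP[x0 _]; rewrite (hA x) lerDl mulr_ge0.
- apply: (Rintegral_funrpos_gt0 (a := - 2^-1) (b := 0) (c := h 0) hint) => //; try lra.
  by move=> x /andP[_ x0]; rewrite (hA x) lerDl mulr_le0// ltW.
Qed.

End type_distribution.

Local Ltac solve_set_itv :=
  apply/seteqP; split=> j /=; rewrite /Defs.half !in_itv/=;
  repeat match goal with
  | H : _ /\ _ |- _ => case: H
  | H : is_true (_ && _) |- _ => move/andP: H
  | |- _ /\ _ => split
  | |- is_true (_ && _) => apply/andP; split
  | |- _ -> _ => move=> ?
  end; lra.

Section recommendation_value.
Context {R : realType} (F : cumulative R R) (qH q1 q2 qL : R).
Hypothesis F_cdf : type_cdf F.
Hypothesis F_sym : forall x, F (- x) = 1 - F x.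
Hypotheses (qH_gt0 : 0 < qH) (q1_gt0 : 0 < q1) (q2_gt0 : 0 < q2) (qL_gt0 : 0 < qL).
Hypothesis q_sum : qH + q1 + q2 + qL = 1.
Local Notation mu := (lebesgue_stieltjes_measure F).
Local Notation D := (`[- 2^-1, 2^-1]%classic : set (measurableTypeR R)).
Local Notation U0 := (U_alt qH q1 q2).

(* [pi^r (U^r_x - U^0_x)], expanded so that no division by [pi^r] occurs. *)
Definition gain (R1 R2 : R) (r : recom) (x : R) : R :=
  qH * prob_rec_given F R1 R2 vH r * (payoff x vH - U0 x)
  + q1 * prob_rec_given F R1 R2 v1 r * (payoff x v1 - U0 x)
  + q2 * prob_rec_given F R1 R2 v2 r * (payoff x v2 - U0 x)
  + qL * prob_rec_given F R1 R2 vL r * (payoff x vL - U0 x).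

Lemma affine_gain R1 R2 r : affine (gain R1 R2 r).
Proof. by move=> x; rewrite /gain /payoff /U_alt /=; ring. Qed.

Lemma prob_rec_given_ge0 R1 R2 v r : 0 <= prob_rec_given F R1 R2 v r.
Proof. by rewrite fine_ge0// measure_ge0. Qed.

Lemma gain_U_recE R1 R2 r x : prob_rec F qH q1 q2 qL R1 R2 r != 0 ->
  gain R1 R2 r x =
  prob_rec F qH q1 q2 qL R1 R2 r * (U_rec F qH q1 q2 qL R1 R2 r x - U0 x).
Proof.
rewrite /U_rec /posterior /gain /prob_rec /prior /payoff /= => pi_neq0.
by field.
Qed.

Lemma gain_eq0 R1 R2 r x : prob_rec F qH q1 q2 qL R1 R2 r <= 0 ->
  gain R1 R2 r x = 0.
Proof.
have weight_ge0 q v : 0 < q -> 0 <= q * prob_rec_given F R1 R2 v r.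
  by move=> q_gt0; rewrite mulr_ge0 ?prob_rec_given_ge0 ?ltW.
have := weight_ge0 _ vH qH_gt0; have := weight_ge0 _ v1 q1_gt0.
have := weight_ge0 _ v2 q2_gt0; have := weight_ge0 _ vL qL_gt0.
rewrite /prob_rec /prior /gain => wL w2 w1 wH pi_le0.
have -> : qH * prob_rec_given F R1 R2 vH r = 0 by lra.
have -> : q1 * prob_rec_given F R1 R2 v1 r = 0 by lra.
have -> : q2 * prob_rec_given F R1 R2 v2 r = 0 by lra.
have -> : qL * prob_rec_given F R1 R2 vL r = 0 by lra.
by rewrite !mul0r !addr0.
Qed.

Lemma value_termE R1 R2 r :
  value_term F qH q1 q2 qL R1 R2 r = (\int[mu]_(x in D) (gain R1 R2 r)^\+ x)%:E.
Proof.
rewrite /value_term; case: ifPn => [pi_gt0|]; last first.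
  rewrite -leNgt => pi_le0.
  rewrite /Rintegral (eq_integral (cst 0%E)) ?integral0// => x _.
  by rewrite /funrpos gain_eq0// maxxx.
have U_recA : affine (fun x => U_rec F qH q1 q2 qL R1 R2 r x - U0 x).
  by move=> x; rewrite /U_rec /U_alt; ring.
rewrite -ge0_integralZl_EFin ?ltW//; last 2 first.
- by move=> x _; rewrite lee_fin le_max lexx orbT.
- apply/measurable_EFinP; apply: (measurable_funrpos (f := fun x => _ - _)).
  exact: measurable_affine.
rewrite /Rintegral fineK; last first.
  exact/integrable_fin_num/affine_integrable_funrpos/affine_gain.
apply: eq_integral => x _; rewrite -EFinM /funrpos maxr_pMr ?ltW// mulr0.
by rewrite gain_U_recE// gt_eqF.
Qed.

Definition gainH (x : R) : R := qH * (1 - U0 x).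
Definition gainL (x : R) : R := qL * U0 x.
Definition gainM (x : R) : R :=
  q1 * (payoff x v1 - U0 x) + q2 * (payoff x v2 - U0 x).

Lemma affine_gainH : affine gainH.
Proof. by move=> x; rewrite /gainH /U_alt; ring. Qed.

Lemma affine_gainM : affine gainM.
Proof. by move=> x; rewrite /gainM /payoff /U_alt /=; ring. Qed.

Lemma gainM_gainLH (x : R) : gainM x = gainL x - gainH x.
Proof.
rewrite /gainM /gainL /gainH /payoff /U_alt /=.
have -> : qL = 1 - qH - q1 - q2 by rewrite -q_sum; ring.
ring.
Qed.

Lemma gainM0 : gainM 0 = (q1 + q2) * (qL - qH) / 2.
Proof.
rewrite /gainM /payoff /U_alt /=.
have -> : qL = 1 - qH - q1 - q2 by rewrite -q_sum; ring.
by field.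
Qed.

Lemma U_alt_itv (x : R) : - 2^-1 <= x <= 2^-1 -> 0 <= U0 x <= 1.
Proof.
move=> /andP[? ?]; rewrite /U_alt.
(* [lra] and [nra] do not see section hypotheses, hence the local copies. *)
have := qH_gt0; have := q1_gt0; have := q2_gt0; have := qL_gt0; have := q_sum.
by move=> *; apply/andP; split; nra.
Qed.

Lemma gainH_ge0 (x : R) : - 2^-1 <= x <= 2^-1 -> 0 <= gainH x.
Proof.
by move=> /U_alt_itv/andP[_ U1]; rewrite /gainH mulr_ge0 ?subr_ge0 ?(ltW qH_gt0).
Qed.

Lemma gainL_ge0 (x : R) : - 2^-1 <= x <= 2^-1 -> 0 <= gainL x.
Proof. by move=> /U_alt_itv/andP[U0 _]; rewrite /gainL mulr_ge0 ?(ltW qL_gt0). Qed.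

Lemma Rintegral_gainM_pos_gt0 : qH < qL -> 0 < \int[mu]_(x in D) gainM^\+ x.
Proof.
move=> qHL; apply: affine_Rintegral_funrpos_gt0 => //; first exact: affine_gainM.
rewrite gainM0 divr_gt0//.
by apply: mulr_gt0; [exact: addr_gt0|rewrite subr_gt0].
Qed.

Lemma Rintegral_gainM_neg_gt0 : qL < qH -> 0 < \int[mu]_(x in D) gainM^\- x.
Proof.
move=> qLH; rewrite -funrposN; apply: affine_Rintegral_funrpos_gt0 => //.
  by move=> x; rewrite /= [gainM x]affine_gainM; ring.
rewrite /= gainM0 -mulNr -mulrN opprB divr_gt0//.
by apply: mulr_gt0; [exact: addr_gt0|rewrite subr_gt0].
Qed.

Section thresholds.
Variables R1 R2 : R.
Hypotheses (R1_gt0 : 0 < R1) (R12 : R1 <= R2) (R2_lt1 : R2 < 1).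

Lemma recommend_rB (u : R) : (recommend R1 R2 u = rB) = (R2 <= u).
Proof.
rewrite /recommend propeqE.
by case: (leP R2 u) => R2u; case: (ltP u R1) => uR1 /=; split.
Qed.

Lemma recommend_rD (u : R) : (recommend R1 R2 u = rD) = (u < R1).
Proof.
rewrite /recommend propeqE.
case: (leP R2 u) => R2u; case: (ltP u R1) => uR1 /=; split => //.
by have := le_lt_trans (le_trans R12 R2u) uR1; rewrite ltxx.
Qed.

Lemma recommend_rN (u : R) : (recommend R1 R2 u = rN) = (R1 <= u < R2).
Proof.
rewrite /recommend propeqE.
by case: (leP R2 u) => R2u; case: (ltP u R1) => uR1 /=; split.
Qed.

Definition prob_rec_mixed (r : recom) : R :=
  match r with
  | rB => 1 - F (R2 - 2^-1)
  | rN => F (R2 - 2^-1) - F (R1 - 2^-1)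
  | rD => F (R1 - 2^-1)
  end.

Lemma prob_rec_given_vH r :
  prob_rec_given F R1 R2 vH r = if r is rB then 1 else 0.
Proof.
have payoffE (j : R) : payoff j vH = 1 by rewrite /payoff/=; lra.
have recE : recommend R1 R2 1 = rB by rewrite /recommend (ltW R2_lt1).
rewrite /prob_rec_given; under eq_set do rewrite payoffE recE.
case: r.
- rewrite (_ : [set _ | _] = D) ?lebesgue_stieltjes_measure_type_support//.
  by apply/seteqP; split=> j //= [].
- by rewrite (_ : [set _ | _] = set0) ?measure0//; apply/seteqP; split=> j // [].
- by rewrite (_ : [set _ | _] = set0) ?measure0//; apply/seteqP; split=> j // [].
Qed.

Lemma prob_rec_given_vL r :
  prob_rec_given F R1 R2 vL r = if r is rD then 1 else 0.
Proof.
have payoffE (j : R) : payoff j vL = 0 by rewrite /payoff/=; lra.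
have recE : recommend R1 R2 0 = rD.
  by rewrite /recommend R1_gt0 ifF// leNgt (lt_le_trans R1_gt0 R12).
rewrite /prob_rec_given; under eq_set do rewrite payoffE recE.
case: r.
- by rewrite (_ : [set _ | _] = set0) ?measure0//; apply/seteqP; split=> j // [].
- by rewrite (_ : [set _ | _] = set0) ?measure0//; apply/seteqP; split=> j // [].
- rewrite (_ : [set _ | _] = D) ?lebesgue_stieltjes_measure_type_support//.
  by apply/seteqP; split=> j //= [].
Qed.

Lemma prob_rec_given_v1 r : prob_rec_given F R1 R2 v1 r = prob_rec_mixed r.
Proof.
have := R1_gt0; have := R12; have := R2_lt1; move=> *.
have cF := cdf_continuous F_cdf.
have payoffE (j : R) : payoff j v1 = 2^-1 + j by rewrite /payoff/=; lra.
rewrite /prob_rec_given; under eq_set do rewrite payoffE.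
case: r => /=.
- under eq_set do rewrite recommend_rB.
  rewrite (_ : [set _ | _] = `[R2 - 2^-1, 2^-1]%classic); last by solve_set_itv.
  by rewrite lebesgue_stieltjes_measure_itv_cc//= ?(@cdf_eq1 _ F F_cdf 2^-1)//; lra.
- under eq_set do rewrite recommend_rN.
  rewrite (_ : [set _ | _] = `[R1 - 2^-1, R2 - 2^-1[%classic); last by solve_set_itv.
  by rewrite lebesgue_stieltjes_measure_itv_co//=; lra.
- under eq_set do rewrite recommend_rD.
  rewrite (_ : [set _ | _] = `[- 2^-1, R1 - 2^-1[%classic); last by solve_set_itv.
  by rewrite lebesgue_stieltjes_measure_itv_co//= ?(@cdf_eq0 _ F F_cdf (- 2^-1))//; lra.
Qed.

Lemma prob_rec_given_v2 r : prob_rec_given F R1 R2 v2 r = prob_rec_mixed r.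
Proof.
have := R1_gt0; have := R12; have := R2_lt1; move=> *.
have cF := cdf_continuous F_cdf.
have payoffE (j : R) : payoff j v2 = 2^-1 - j by rewrite /payoff/=; lra.
rewrite /prob_rec_given; under eq_set do rewrite payoffE.
case: r => /=.
- under eq_set do rewrite recommend_rB.
  rewrite (_ : [set _ | _] = `[- 2^-1, 2^-1 - R2]%classic); last by solve_set_itv.
  rewrite lebesgue_stieltjes_measure_itv_cc//= ?(@cdf_eq0 _ F F_cdf (- 2^-1))//; last lra.
  by rewrite -[2^-1 - R2]opprB F_sym subr0.
- under eq_set do rewrite recommend_rN.
  rewrite (_ : [set _ | _] = `]2^-1 - R2, 2^-1 - R1]%classic); last by solve_set_itv.
  rewrite lebesgue_stieltjes_measure_itv_oc//=; last lra.
  by rewrite -[2^-1 - R1]opprB -[2^-1 - R2]opprB !F_sym; lra.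
- under eq_set do rewrite recommend_rD.
  rewrite (_ : [set _ | _] = `]2^-1 - R1, 2^-1]%classic); last by solve_set_itv.
  rewrite lebesgue_stieltjes_measure_itv_oc//= ?(@cdf_eq1 _ F F_cdf 2^-1)//; last lra.
  by rewrite -[2^-1 - R1]opprB F_sym; lra.
Qed.

Lemma gainE r (x : R) : gain R1 R2 r x =
  (if r is rB then gainH x else 0) + prob_rec_mixed r * gainM x
  - (if r is rD then gainL x else 0).
Proof.
rewrite /gain prob_rec_given_vH prob_rec_given_vL.
rewrite prob_rec_given_v1 prob_rec_given_v2 /gainH /gainL /gainM /payoff /U_alt.
by case: r => /=; field.
Qed.

Lemma gain_rB_ge0 (x : R) : - 2^-1 <= x <= 2^-1 -> 0 <= gain R1 R2 rB x.
Proof.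
move=> xD; rewrite gainE /= gainM_gainLH.
have := gainH_ge0 xD; have := gainL_ge0 xD.
have := cdf_ge0 F_cdf (R2 - 2^-1); have := cdf_le1 F_cdf (R2 - 2^-1).
move=> *; nra.
Qed.

Lemma gain_rD_le0 (x : R) : - 2^-1 <= x <= 2^-1 -> gain R1 R2 rD x <= 0.
Proof.
move=> xD; rewrite gainE /= gainM_gainLH.
have := gainH_ge0 xD; have := gainL_ge0 xD.
have := cdf_ge0 F_cdf (R1 - 2^-1); have := cdf_le1 F_cdf (R1 - 2^-1).
move=> *; nra.
Qed.

Lemma valueE : value F qH q1 q2 qL R1 R2 =
  (\int[mu]_(x in D) gainH x
   + (1 - F (R1 - 2^-1)) * \int[mu]_(x in D) gainM^\+ x
   - (1 - F (R2 - 2^-1)) * \int[mu]_(x in D) gainM^\- x)%:E.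
Proof.
have mD : measurable D by exact: measurable_itv.
have gainH_int := affine_integrable F_cdf affine_gainH.
have gainM_int := affine_integrable F_cdf affine_gainM.
have gainM_pos_int := integrable_funrpos mD gainM_int.
have gainM_neg_int := integrable_funrneg mD gainM_int.
have F12 : F (R1 - 2^-1) <= F (R2 - 2^-1) by apply: cdf_le; rewrite lerD2r.
have gainB :
    {in D, (gain R1 R2 rB)^\+ =1 fun x => gainH x + (1 - F (R2 - 2^-1)) * gainM x}.
  move=> x /set_mem/=; rewrite in_itv/= => xD.
  by rewrite /funrpos max_l ?gain_rB_ge0// gainE/= subr0.
have gainN :
    (gain R1 R2 rN)^\+ = fun x => (F (R2 - 2^-1) - F (R1 - 2^-1)) * gainM^\+ x.
  rewrite -ge0_funrposM ?subr_ge0//; congr funrpos.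
  by apply/funext => x; rewrite gainE/= add0r subr0.
have gainD : {in D, (gain R1 R2 rD)^\+ =1 cst 0}.
  by apply: le0_funrposE => x /=; rewrite in_itv/=; exact: gain_rD_le0.
rewrite /value !value_termE -!EFinD; congr EFin.
rewrite (eq_Rintegral _ gainB) gainN (eq_Rintegral _ gainD) Rintegral_cst// mul0r addr0.
rewrite RintegralD//; last first.
  apply: affine_integrable => // x.
  by rewrite [gainM x]affine_gainM; ring.
rewrite (RintegralZl _ mD gainM_int) (RintegralZl _ mD gainM_pos_int).
have -> : \int[mu]_(x in D) gainM x =
    \int[mu]_(x in D) gainM^\+ x - \int[mu]_(x in D) gainM^\- x.
  rewrite -RintegralB//; apply: eq_Rintegral => x _.
  by rewrite -[in LHS](funrposBneg gainM).
ring.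
Qed.

End thresholds.

End recommendation_value.

Theorem proposition10 (R : realType) (F : cumulative R R)
  (qH q1 q2 qL : R) :
  type_cdf F ->
  (forall i : R, F (- i) = 1 - F i) ->
  0 < qH -> 0 < q1 -> 0 < q2 -> 0 < qL -> qH + q1 + q2 + qL = 1 ->
  (qH / qL < 1 ->
     forall R1 R1' R2 : R, 0 < R1 -> R1 < R1' -> R1' <= R2 -> R2 < 1 ->
       (value F qH q1 q2 qL R1' R2 < value F qH q1 q2 qL R1 R2)%E) /\
  (1 < qH / qL ->
     forall R1 R2 R2' : R, 0 < R1 -> R1 <= R2 -> R2 < R2' -> R2' < 1 ->
       (value F qH q1 q2 qL R1 R2 < value F qH q1 q2 qL R1 R2')%E).
Proof.
move=> F_cdf F_sym qH_gt0 q1_gt0 q2_gt0 qL_gt0 q_sum.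
have value_closed := valueE F_cdf F_sym qH_gt0 q1_gt0 q2_gt0 qL_gt0 q_sum.
split.
- rewrite ltr_pdivrMr// mul1r => qHL R1 R1' R2 R1_gt0 R11' R1'2 R2_lt1.
  rewrite !value_closed ?(le_trans (ltW R11'))// ?(lt_trans R1_gt0)// lte_fin.
  have := Rintegral_gainM_pos_gt0 F_cdf q1_gt0 q2_gt0 q_sum qHL.
  have : F (R1 - 2^-1) < F (R1' - 2^-1) by apply: (cdf_lt F_cdf); lra.
  nra.
- rewrite ltr_pdivlMr// mul1r => qLH R1 R2 R2' R1_gt0 R12 R22' R2'_lt1.
  rewrite !value_closed ?(le_trans R12 (ltW R22'))// ?(lt_trans R22')// lte_fin.
  have := Rintegral_gainM_neg_gt0 F_cdf q1_gt0 q2_gt0 q_sum qLH.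
  have : F (R2 - 2^-1) < F (R2' - 2^-1) by apply: (cdf_lt F_cdf); lra.
  nra.
Qed.
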